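(* (1) $s_3=U(S_2-S_{1,1})\in\mathcal{E}(\mathcal{P}^{s+}_{3,5})$. (2) If $f\in\mathcal{P}^{s+}_{3,5}$ satisfies $f(0,x,1)=0$ for all $x\ge0$, $f_a(0,0,1)=0$ and $f(1,1,1)=0$, then $f=\lambda s_3$ for some $\lambda\ge0$.
   Context: Let $a,b,c$ be variables. For nonnegative integers $m,n$ put $S_{m,n}=a^mb^n+b^mc^n+c^ma^n$, $S_n=S_{n,0}=a^n+b^n+c^n$, $T_{m,n}=S_{m,n}+S_{n,m}$, $U=abc$ (so $S_{1,1}=ab+bc+ca$). Let $\mathcal{H}^s_{3,5}$ be the real vector space of symmetric homogeneous polynomials of degree 5 in $\mathbb{R}[a,b,c]$; it has basis $s_0=S_5-US_{1,1}$, $s_1=T_{4,1}-2US_{1,1}$, $s_2=T_{3,2}-2US_{1,1}$, $s_3=US_2-US_{1,1}$, $s_4=US_{1,1}$. Let $\mathcal{P}^{s+}_{3,5}=\{f\in\mathcal{H}^s_{3,5}: f(a,b,c)\ge 0\text{ for all }a,b,c\ge0\}$. For a closed convex cone $\mathcal{P}$, an element $f\in\mathcal{P}\setminus\{0\}$ is extremal if whenever $f=g+h$ with $g,h\in\mathcal{P}$ we have $g,h\in\mathbb{R}_{\ge0}f$; $\mathcal{E}(\mathcal{P})$ is the set of extremal elements. $f_a=\partial f/\partial a$. *)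

From HB Require Import structures.
From mathcomp Require Import all_boot all_order all_algebra.
From mathcomp Require Import mpoly.
Set Implicit Arguments. Unset Strict Implicit. Unset Printing Implicit Defensive.
Import Order.TTheory GRing.Theory Num.Theory.
Local Open Scope ring_scope.

Section Defs.
Variable R : rcfType.

Definition va : {mpoly R[3]} := 'X_(0 : 'I_3).
Definition vb : {mpoly R[3]} := 'X_(1 : 'I_3).
Definition vc : {mpoly R[3]} := 'X_(2 : 'I_3).

Definition Smn (m n : nat) : {mpoly R[3]} :=
  va ^+ m * vb ^+ n + vb ^+ m * vc ^+ n + vc ^+ m * va ^+ n.
Definition Sn (n : nat) : {mpoly R[3]} := Smn n 0.
Definition Tmn (m n : nat) : {mpoly R[3]} := Smn m n + Smn n m.
Definition Uabc : {mpoly R[3]} := va * vb * vc.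

Definition s3 : {mpoly R[3]} := Uabc * Sn 2 - Uabc * Smn 1 1.

Definition pt (a b c : R) : 'I_3 -> R := fun i => nth 0 [:: a; b; c] i.

Definition Hs35 (f : {mpoly R[3]}) : Prop :=
  f \is symmetric /\ f \is 5.-homog.

Definition Ps35 (f : {mpoly R[3]}) : Prop :=
  Hs35 f /\ forall a b c : R, 0 <= a -> 0 <= b -> 0 <= c -> 0 <= f.@[pt a b c].

Definition extremal (P : {mpoly R[3]} -> Prop) (f : {mpoly R[3]}) : Prop :=
  P f /\ f != 0 /\
  forall g h : {mpoly R[3]}, P g -> P h -> f = g + h ->
    (exists l : R, 0 <= l /\ g = l *: f) /\ (exists l : R, 0 <= l /\ h = l *: f).

Definition deriv_a (f : {mpoly R[3]}) : {mpoly R[3]} := mderiv (0 : 'I_3) f.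

End Defs.

From Pilot Require Import Defs.
From HB Require Import structures.
From mathcomp Require Import all_boot all_order all_algebra.
From mathcomp Require Import perm mpoly ring lra zify.
Set Implicit Arguments. Unset Strict Implicit. Unset Printing Implicit Defensive.
Import Order.TTheory GRing.Theory Num.Theory.
Local Open Scope ring_scope.

(* A symmetric form f of degree 5 in a, b, c has equal coefficients on
   permuted monomials, so it is the combination
     symq p q r u t = p m_5 + q m_41 + r m_32 + u m_311 + t m_221
   of the five monomial symmetric polynomials, with p, q, r, u, t the
   coefficients of a^5, a^4 b, a^3 b^2, a^3 b c, a^2 b^2 c; and
   s_3 = m_311 - m_221.
   Part (2): f(0, x, 1) = p (x^5 + 1) + q (x^4 + x) + r (x^3 + x^2), so its
   vanishing at x = 0, 1, 2 forces p = q = r = 0; then f(1,1,1) = 0 gives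
   t = -u and f(2,1,1) = 2u >= 0, i.e. f = u s_3 with u >= 0.
   Part (1): s_3 is symmetric (2 s_3 = abc (3 p_2 - p_1^2) with power sums
   p_k), homogeneous, nonzero and nonnegative (abc times half a sum of
   squares); if s_3 = g + h in the cone then g vanishes wherever s_3 does,
   in particular on {a = 0, c = 1} and at (1,1,1), so (2) applies to g, h. *)

Definition mnm3 (i j k : nat) : 'X_{1..3} := [multinom [tuple i; j; k]].

Lemma ord3P (P : 'I_3 -> Prop) : P 0 -> P 1 -> P 2%R -> forall l, P l.
Proof.
move=> P0 P1 P2 [[|[|[|l]]] lt_l3] //.
- by have -> : Ordinal lt_l3 = 0 by apply: val_inj.
- by have -> : Ordinal lt_l3 = 1 by apply: val_inj.
- by have -> : Ordinal lt_l3 = 2%R by apply: val_inj.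
Qed.

Lemma mnm3_eta (m : 'X_{1..3}) : m = mnm3 (m 0) (m 1) (m 2%R).
Proof. by apply/mnmP; apply: ord3P. Qed.

Lemma mnm3_eqE a b c i j k :
  (mnm3 a b c == mnm3 i j k) = [&& a == i, b == j & c == k].
Proof.
apply/eqP/and3P => [E|[/eqP-> /eqP-> /eqP->]] //.
by rewrite -[a]/(mnm3 a b c 0) -[b]/(mnm3 a b c 1) -[c]/(mnm3 a b c 2%R) E !eqxx.
Qed.

Lemma mdeg_mnm3 i j k : mdeg (mnm3 i j k) = (i + j + k)%N.
Proof. by rewrite mdegE !big_ord_recr big_ord0 /= add0n. Qed.

Section SymmetricQuintics.
Variable R : nzRingType.

Local Notation x_ i := ('X_(i : 'I_3) : {mpoly R[3]}).

Definition mX (i j k : nat) : {mpoly R[3]} := 'X_[mnm3 i j k].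

Lemma mXE i j k : mX i j k = x_ 0 ^+ i * x_ 1 ^+ j * x_ 2%R ^+ k.
Proof.
rewrite /mX !mpolyXn -!mpolyXD; congr 'X_[_]; apply/mnmP; apply: ord3P.
all: by rewrite !mnmDE !mulmnE !mnm1E /= !(mul0n, mul1n, addn0, add0n).
Qed.

Lemma mX_homog d i j k : (i + j + k)%N = d -> mX i j k \is d.-homog.
Proof. by move=> <-; rewrite dhomogX; apply/eqP; apply: mdeg_mnm3. Qed.

Definition m5 := mX 5 0 0 + mX 0 5 0 + mX 0 0 5.
Definition m41 :=
  mX 4 1 0 + mX 4 0 1 + mX 1 4 0 + mX 0 4 1 + mX 1 0 4 + mX 0 1 4.
Definition m32 :=
  mX 3 2 0 + mX 3 0 2 + mX 2 3 0 + mX 0 3 2 + mX 2 0 3 + mX 0 2 3.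
Definition m311 := mX 3 1 1 + mX 1 3 1 + mX 1 1 3.
Definition m221 := mX 2 2 1 + mX 2 1 2 + mX 1 2 2.

Definition symq (p q r u t : R) : {mpoly R[3]} :=
  p *: m5 + q *: m41 + r *: m32 + u *: m311 + t *: m221.

Lemma symq_homog p q r u t : symq p q r u t \is 5.-homog.
Proof. by rewrite !rpredD ?rpredZ // !rpredD // mX_homog. Qed.

Definition kron3 (a b d i j k : nat) : R := [&& a == i, b == j & d == k]%:R.

Definition symq_coeff (p q r u t : R) (i j k : nat) : R :=
  p * (kron3 5 0 0 i j k + kron3 0 5 0 i j k + kron3 0 0 5 i j k)
  + q * (kron3 4 1 0 i j k + kron3 4 0 1 i j k + kron3 1 4 0 i j k
         + kron3 0 4 1 i j k + kron3 1 0 4 i j k + kron3 0 1 4 i j k)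
  + r * (kron3 3 2 0 i j k + kron3 3 0 2 i j k + kron3 2 3 0 i j k
         + kron3 0 3 2 i j k + kron3 2 0 3 i j k + kron3 0 2 3 i j k)
  + u * (kron3 3 1 1 i j k + kron3 1 3 1 i j k + kron3 1 1 3 i j k)
  + t * (kron3 2 2 1 i j k + kron3 2 1 2 i j k + kron3 1 2 2 i j k).

Lemma coeff_symq p q r u t i j k :
  (symq p q r u t)@_(mnm3 i j k) = symq_coeff p q r u t i j k.
Proof. by rewrite !mcoeffD !mcoeffZ !mcoeffD !mcoeffX !mnm3_eqE. Qed.

(* Each of the 21 triples is reached from its sorted rearrangement by at most
   three transpositions. *)
Lemma sym_fun_quintic (c : nat -> nat -> nat -> R) :
  (forall i j k, c i j k = c j i k) -> (forall i j k, c i j k = c i k j) ->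
  forall i j k, (i + j + k = 5)%N ->
  c i j k = symq_coeff (c 5 0 0) (c 4 1 0) (c 3 2 0) (c 3 1 1) (c 2 2 1) i j k.
Proof.
move=> c01 c12 i j k deg5.
have [le_i5 le_j5 ->] : [/\ (i <= 5)%N, (j <= 5)%N & k = (5 - i - j)%N].
  by split; lia.
move: deg5; rewrite /symq_coeff /kron3.
case: i le_i5 => [|[|[|[|[|[|//]]]]]] _;
  case: j le_j5 => [|[|[|[|[|[|//]]]]]] _; rewrite !subnE //= => _.
all: rewrite ?mulr0n ?mulr1n ?add0r ?addr0 ?mulr0 ?mulr1 ?add0r ?addr0.
all: first [ done | by rewrite c01 | by rewrite c12 | by rewrite c01 c12
           | by rewrite c12 c01 | by rewrite c01 c12 c01 ].
Qed.

Section SymmetricCoefficients.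
Variable f : {mpoly R[3]}.
Hypothesis f_sym : f \is symmetric.

Lemma coeff_swap01 i j k : f@_(mnm3 i j k) = f@_(mnm3 j i k).
Proof.
rewrite -(msym_coeff (mnm3 j i k) (tperm 0 1) f_sym); congr (_@__).
by apply/mnmP; apply: ord3P; rewrite mnmE ?tpermL ?tpermR ?tpermD.
Qed.

Lemma coeff_swap12 i j k : f@_(mnm3 i j k) = f@_(mnm3 i k j).
Proof.
rewrite -(msym_coeff (mnm3 i k j) (tperm 1 2) f_sym); congr (_@__).
by apply/mnmP; apply: ord3P; rewrite mnmE ?tpermL ?tpermR ?tpermD.
Qed.

Lemma sym_quintic_decomp : f \is 5.-homog ->
  f = symq f@_(mnm3 5 0 0) f@_(mnm3 4 1 0) f@_(mnm3 3 2 0)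
           f@_(mnm3 3 1 1) f@_(mnm3 2 2 1).
Proof.
move=> f_homog; apply/mpolyP => m.
have [deg5|deg_ne5] := eqVneq (mdeg m) 5; last first.
  by rewrite !(dhomog_nemf_coeff _ deg_ne5) ?symq_homog.
rewrite (mnm3_eta m) coeff_symq; rewrite (mnm3_eta m) mdeg_mnm3 in deg5.
exact: (@sym_fun_quintic (fun i j k => f@_(mnm3 i j k)))
  coeff_swap01 coeff_swap12 _ _ _ deg5.
Qed.

End SymmetricCoefficients.
End SymmetricQuintics.
Arguments mX {R} i j k.
Arguments m5 {R}.
Arguments m41 {R}.
Arguments m32 {R}.
Arguments m311 {R}.
Arguments m221 {R}.

Section PowerSums.
Variables (R : nzRingType) (n : nat).

Definition psum (k : nat) : {mpoly R[n]} := \sum_(i < n) 'X_i ^+ k.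

Lemma msymXU (s : 'S_n) (i : 'I_n) : msym s ('X_i : {mpoly R[n]}) = 'X_(s i).
Proof.
rewrite msymX; congr 'X_[_]; apply/mnmP => l; rewrite mnmE !mnm1E.
by rewrite -(inj_eq (@perm_inj _ s)) permKV.
Qed.

Lemma psum_sym k : psum k \is symmetric.
Proof.
apply/issymP => s; rewrite /psum raddf_sum [RHS](reindex_inj (@perm_inj _ s)).
by apply: eq_bigr => i _ /=; rewrite rmorphXn /= msymXU.
Qed.

Lemma prodX_sym : \prod_(i < n) ('X_i : {mpoly R[n]}) \is symmetric.
Proof. by rewrite -mesymnnE mesym_sym. Qed.

End PowerSums.
Arguments psum {R n} k.

Lemma big_ord3 (T : Type) (idx : T) (op : Monoid.law idx) (F : 'I_3 -> T) :
  \big[op/idx]_(i < 3) F i = op (op (F 0) (F 1)) (F 2%R).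
Proof.
rewrite !big_ord_recl big_ord0 Monoid.mulm1 Monoid.mulmA.
by congr (op (op (F _) (F _)) (F _)); apply: val_inj.
Qed.

Section RealQuintics.
Variable R : rcfType.

Lemma meval_mX a b c i j k :
  (mX i j k : {mpoly R[3]}).@[pt a b c] = a ^+ i * b ^+ j * c ^+ k.
Proof. by rewrite mXE !rmorphM !rmorphXn /= !mevalXU. Qed.

Lemma meval_symq p q r u t a b c :
  (symq p q r u t : {mpoly R[3]}).@[pt a b c] =
    p * (a ^+ 5 + b ^+ 5 + c ^+ 5)
  + q * (a ^+ 4 * b + a ^+ 4 * c + a * b ^+ 4 + b ^+ 4 * c + a * c ^+ 4
         + b * c ^+ 4)
  + r * (a ^+ 3 * b ^+ 2 + a ^+ 3 * c ^+ 2 + a ^+ 2 * b ^+ 3 + b ^+ 3 * c ^+ 2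
         + a ^+ 2 * c ^+ 3 + b ^+ 2 * c ^+ 3)
  + u * (a ^+ 3 * b * c + a * b ^+ 3 * c + a * b * c ^+ 3)
  + t * (a ^+ 2 * b ^+ 2 * c + a ^+ 2 * b * c ^+ 2 + a * b ^+ 2 * c ^+ 2).
Proof.
by rewrite /symq /m5 /m41 /m32 /m311 /m221 !(mevalD, mevalZ) !meval_mX; ring.
Qed.

Lemma s3_symq : s3 R = symq 0 0 0 1 (-1).
Proof.
rewrite /symq !scale0r !add0r scale1r scaleN1r /s3 /Uabc /Sn /Smn /m311 /m221.
by rewrite /Defs.va /Defs.vb /Defs.vc !mXE; ring.
Qed.

Lemma symq_s3 (u : R) : symq 0 0 0 u (- u) = u *: s3 R.
Proof.
by rewrite s3_symq /symq !scale0r !add0r scale1r scaleN1r scalerBr scaleNr.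
Qed.

Lemma meval_s3 a b c : (s3 R).@[pt a b c] =
  a * b * c * (a ^+ 2 + b ^+ 2 + c ^+ 2 - a * b - b * c - c * a).
Proof. by rewrite s3_symq meval_symq; ring. Qed.

Lemma s3_double :
  s3 R *+ 2 = \prod_(i < 3) 'X_i * (psum 2 *+ 3 - psum 1 ^+ 2).
Proof.
by rewrite /psum !big_ord3 /= /s3 /Uabc /Sn /Smn /Defs.va /Defs.vb /Defs.vc; ring.
Qed.

Lemma s3_sym : s3 R \is symmetric.
Proof.
have s3x2_sym : s3 R *+ 2 \is symmetric.
  rewrite s3_double; apply: rpredM; first exact: prodX_sym.
  by apply: rpredB; [apply: rpredMn | apply: rpredX]; exact: psum_sym.
have two_neq0 : (2 : R) != 0 by rewrite pnatr_eq0.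
by rewrite -[s3 R]scale1r -(mulVf two_neq0) -scalerA scaler_nat; apply: rpredZ.
Qed.

Lemma s3_homog : s3 R \is 5.-homog.
Proof. by rewrite s3_symq symq_homog. Qed.

(* On the orthant s_3 is abc times half the sum of the squares of the
   differences of the variables. *)
Lemma s3_ge0 a b c : 0 <= a -> 0 <= b -> 0 <= c -> 0 <= (s3 R).@[pt a b c].
Proof.
move=> a_ge0 b_ge0 c_ge0; rewrite meval_s3.
have -> : a ^+ 2 + b ^+ 2 + c ^+ 2 - a * b - b * c - c * a =
    ((a - b) ^+ 2 + (b - c) ^+ 2 + (c - a) ^+ 2) / 2 by field.
by rewrite !mulr_ge0 ?invr_ge0 ?ler0n // !addr_ge0 // sqr_ge0.
Qed.

Lemma s3_Ps35 : Ps35 (s3 R).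
Proof. by split; [split; [exact: s3_sym | exact: s3_homog] | exact: s3_ge0]. Qed.

(* s_3(2,1,1) = 2. *)
Lemma s3_neq0 : s3 R != 0.
Proof.
apply/eqP => /(congr1 (meval (pt 2 1 1))); rewrite meval_s3 meval0 => s3_211.
have two_eq0 : (2 : R) = 0 by rewrite -s3_211; ring.
by move/eqP: two_eq0; rewrite pnatr_eq0.
Qed.

(* The linear constraints on the coordinates of a symmetric quintic that
   vanishes on the edge {a = 0, c = 1} and at (1,1,1) and is nonnegative at
   (2,1,1): the values at (0,x,1) for x = 0, 1, 2 kill p, q, r. *)
Lemma symq_edge_constraints f (p q r u t : R) : f = symq p q r u t ->
  (forall x, 0 <= x -> f.@[pt 0 x 1] = 0) -> f.@[pt 1 1 1] = 0 ->
  0 <= f.@[pt 2 1 1] -> [/\ p = 0, q = 0, r = 0, t = - u & 0 <= u].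
Proof.
move=> -> f_edge f_111 f_211.
have e0 : p = 0 by rewrite -(f_edge 0 (lexx 0)) meval_symq; ring.
have e1 : 2 * p + 2 * q + 2 * r = 0.
  by rewrite -(f_edge 1 ler01) meval_symq; ring.
have e2 : 33 * p + 18 * q + 12 * r = 0.
  by rewrite -(f_edge 2 (ler0n _ 2)) meval_symq; ring.
have e111 : 3 * p + 6 * q + 6 * r + 3 * u + 3 * t = 0.
  by rewrite -f_111 meval_symq; ring.
have e211 : 0 <= 34 * p + 38 * q + 26 * r + 12 * u + 10 * t.
  by move: f_211; rewrite meval_symq; congr (0 <= _); ring.
by split; lra.
Qed.

(* Part (2), without the (redundant) condition on f_a(0,0,1). *)
Lemma Ps35_vanishing f : Ps35 f ->
  (forall x, 0 <= x -> f.@[pt 0 x 1] = 0) -> f.@[pt 1 1 1] = 0 ->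
  exists l, 0 <= l /\ f = l *: s3 R.
Proof.
case=> [[f_sym f_homog] f_ge0] f_edge f_111.
have f_symq := sym_quintic_decomp f_sym f_homog.
have [p0 q0 r0 tu u_ge0] := symq_edge_constraints f_symq f_edge f_111
  (f_ge0 2 1 1 (ler0n _ 2) ler01 ler01).
by exists f@_(mnm3 3 1 1); rewrite [LHS]f_symq p0 q0 r0 tu symq_s3.
Qed.

(* A summand of s_3 in the cone is a nonnegative multiple of s_3: being
   nonnegative, it vanishes wherever s_3 does. *)
Lemma Ps35_summand_s3 g h : Ps35 g -> Ps35 h -> s3 R = g + h ->
  exists l, 0 <= l /\ g = l *: s3 R.
Proof.
move=> g_Ps35 [_ h_ge0] s3_gh; have g_ge0 := g_Ps35.2.
have g_vanish a b c : 0 <= a -> 0 <= b -> 0 <= c ->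
    (s3 R).@[pt a b c] = 0 -> g.@[pt a b c] = 0.
  move=> a_ge0 b_ge0 c_ge0; rewrite s3_gh mevalD => /eqP.
  by rewrite paddr_eq0 ?g_ge0 ?h_ge0 // => /andP[/eqP].
apply: Ps35_vanishing g_Ps35 _ _ => [x x_ge0|].
- by apply: g_vanish; rewrite ?lexx ?ler01 // meval_s3 !mul0r.
- by apply: g_vanish; rewrite ?ler01 // meval_s3; ring.
Qed.

End RealQuintics.

Theorem theorem4p6 (R : rcfType) :
  extremal (@Ps35 R) (s3 R) /\
  (forall f : {mpoly R[3]}, Ps35 f ->
     (forall x : R, 0 <= x -> f.@[pt 0 x 1] = 0) ->
     (deriv_a f).@[pt 0 0 1] = 0 ->
     f.@[pt 1 1 1] = 0 ->
     exists l : R, 0 <= l /\ f = l *: s3 R).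
Proof.
split; last by move=> f f_Ps35 f_edge _ f_111; exact: Ps35_vanishing.
split; first exact: s3_Ps35.
split; first exact: s3_neq0.
move=> g h g_Ps35 h_Ps35 s3_gh; split; first exact: Ps35_summand_s3 s3_gh.
by apply: Ps35_summand_s3 h_Ps35 g_Ps35 _; rewrite addrC.
Qed.
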